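(* Let $G$ be an ADMG and let $v_1,v_2,v_3$ be distinct vertices of $G$ such that $G$ contains the edges $v_1\to v_2$, $v_2\to v_3$, $v_2\leftrightarrow v_3$ and $v_1\to v_3$. Then the ADMG $G'$ obtained from $G$ by deleting the edge $v_1\to v_3$ is Markov equivalent to $G$.
   Context: An ADMG (acyclic directed mixed graph) has directed edges $v\to w$ forming no directed cycle and bidirected edges $v\leftrightarrow w$ (unordered pairs), $v\neq w$. A path from $a$ to $b$ is a sequence $v_1,e_1,\dots,e_{k-1},v_k$ with $v_1=a\ne b=v_k$ (vertices may repeat), each $e_j$ an edge (directed either way, or bidirected) between $v_j,v_{j+1}$; an internal $v_j$ is a collider if both $e_{j-1},e_j$ have an arrowhead at $v_j$ (directed into $v_j$ or bidirected). $x$ is a descendant of $v$ if $x=v$ or there is a directed path from $v$ to $x$. The path is active given $Z\subseteq V\setminus\{a,b\}$ if every internal non-collider is not in $Z$ and every collider is in $Z$ or has a descendant in $Z$. $a,b$ are d-connected given $Z$ if an active path exists, otherwise d-separated. Two graphs on the same vertex set are Markov equivalent if they have the same d-separation statements for all $a,b,Z$. *)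

From mathcomp Require Import all_boot.
Set Implicit Arguments. Unset Strict Implicit. Unset Printing Implicit Defensive.

(* A mixed graph on a finite vertex type T: directed edges D x y means x -> y,
   bidirected edges B x y means x <-> y (B symmetric, irreflexive). *)

Definition is_ADMG (T : finType) (D B : rel T) : Prop :=
  [/\ irreflexive D,
      (forall x y, D x y -> ~~ connect D y x),
      symmetric B & irreflexive B].

Inductive ekind := Fwd | Bwd | Bi .

Definition edge_ok (T : finType) (D B : rel T) (k : ekind) (x y : T) : bool :=
  match k with Fwd => D x y | Bwd => D y x | Bi => B x y end.

(* A path starting at x given by its list of steps (edge kind, next vertex). *)
Fixpoint is_walk (T : finType) (D B : rel T) (x : T) (s : seq (ekind * T)) : bool :=
  if s is (k, y) :: s' then edge_ok D B k x y && is_walk D B y s' else true.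

(* arrowhead at the head vertex v_{j+1} of the edge e_j *)
Definition head_arrow (k : ekind) : bool := if k is Bwd then false else true.
(* arrowhead at the tail vertex v_j of the edge e_j *)
Definition tail_arrow (k : ekind) : bool := if k is Fwd then false else true.

(* v was reached via an edge of kind k, then the path continues with s. *)
Fixpoint active_from (T : finType) (D : rel T) (Z : {set T})
    (k : ekind) (v : T) (s : seq (ekind * T)) : bool :=
  if s is (k', w) :: s' then
    (if head_arrow k && tail_arrow k'
     then [exists z in Z, connect D v z]   (* collider with a descendant in Z *)
     else v \notin Z)                      (* non-collider not in Z *)
    && active_from D Z k' w s'
  else true.

Definition active_path (T : finType) (D : rel T) (Z : {set T})
    (s : seq (ekind * T)) : bool :=
  if s is (k, w) :: s' then active_from D Z k w s' else true.

Definition d_connected (T : finType) (D B : rel T) (a b : T) (Z : {set T}) : Prop :=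
  exists s : seq (ekind * T),
    [&& is_walk D B a s, last a (map snd s) == b & active_path D Z s].

Definition markov_equiv (T : finType) (D1 B1 D2 B2 : rel T) : Prop :=
  forall (a b : T) (Z : {set T}), a != b -> a \notin Z -> b \notin Z ->
    (d_connected D1 B1 a b Z <-> d_connected D2 B2 a b Z).

Definition delete_dedge (T : finType) (D : rel T) (u w : T) : rel T :=
  [rel x y | D x y && ~~ ((x == u) && (y == w))].

(* Proof idea: deleting v1 -> v3 leaves the ancestral relation unchanged, since
   v1 -> v2 -> v3 remains, so descendant conditions on colliders are the same in
   both graphs and every active path of the smaller graph stays active in the
   larger one.  Conversely, an active path of G using v1 -> v3 is rerouted through
   v2: via v1 -> v2 -> v3 if v2 is not conditioned on (v2 is then a non-collider
   outside Z), and via v1 -> v2 <-> v3 otherwise (v2 is then a collider in Z).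
   In both cases the arrowheads at v1 and v3 are those of v1 -> v3. *)
From mathcomp Require Import all_boot.
Set Implicit Arguments. Unset Strict Implicit.

Section DSeparation.

Variable T : finType.
Implicit Types (D B : rel T) (Z : {set T}) (s : seq (ekind * T)).

Lemma active_from_eq_connect D1 D2 Z :
  connect D1 =2 connect D2 ->
  forall s k v, active_from D1 Z k v s = active_from D2 Z k v s.
Proof.
move=> eqD; elim=> [|[k' w] s IH] k v //=.
rewrite IH; congr (_ && _); case: ifP => // _.
by apply: eq_existsb => z; rewrite eqD.
Qed.

Lemma active_from_head_arrow D Z k1 k2 v s :
  head_arrow k1 = head_arrow k2 -> active_from D Z k1 v s = active_from D Z k2 v s.
Proof. by move=> eqk; case: s => [|[k' w] s] //=; rewrite eqk. Qed.

Lemma active_pathE D Z a s :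
  a \notin Z -> active_path D Z s = active_from D Z Bwd a s.
Proof. by move=> aZ; case: s => [|[k y] s] //=; rewrite aZ. Qed.

Lemma is_walk_subrel D1 D2 B :
  subrel D1 D2 -> forall s x, is_walk D1 B x s -> is_walk D2 B x s.
Proof.
move=> sub; elim=> [|[k y] s IH] x //= /andP[exy wy].
by rewrite IH // andbT; case: k exy => /=; try exact: sub.
Qed.

Lemma d_connected_subrel D1 D2 B a b Z :
  subrel D1 D2 -> connect D1 =2 connect D2 -> a \notin Z ->
  d_connected D1 B a b Z -> d_connected D2 B a b Z.
Proof.
move=> sub eqD aZ [s /and3P[ws ls act]]; exists s.
rewrite (is_walk_subrel sub ws) ls /= (active_pathE _ _ aZ).
by rewrite -(active_from_eq_connect Z eqD) -active_pathE.
Qed.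

Lemma delete_dedge_subrel D u w : subrel (delete_dedge D u w) D.
Proof. by move=> x y /andP[]. Qed.

Section Bypass.

Variables (D B : rel T) (u m w : T).
Hypotheses (m_neq_u : m != u) (m_neq_w : m != w) (Dum : D u m) (Dmw : D m w).

Let D' := delete_dedge D u w.

Lemma delete_dedge_um : D' u m.
Proof. by rewrite /D' /delete_dedge /= Dum eqxx /= (negbTE m_neq_w). Qed.

Lemma delete_dedge_mw : D' m w.
Proof. by rewrite /D' /delete_dedge /= Dmw (negbTE m_neq_u). Qed.

Lemma connect_delete_dedge_bypass : connect D' =2 connect D.
Proof.
move=> x y; apply/idP/idP; apply: connect_sub => {}x {}y.
  by move/delete_dedge_subrel; apply: connect1.
case uw: ((x == u) && (y == w)) => Dxy.
  case/andP: uw => /eqP -> /eqP ->.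
  exact: connect_trans (connect1 delete_dedge_um) (connect1 delete_dedge_mw).
by apply: connect1; rewrite /D' /delete_dedge /= Dxy uw.
Qed.

Definition traverses_uw (k : ekind) (x y : T) : bool :=
  match k with
  | Fwd => (x == u) && (y == w)
  | Bwd => (x == w) && (y == u)
  | Bi => false
  end.

Lemma edge_ok_delete_dedge k x y :
  edge_ok D' B k x y = edge_ok D B k x y && ~~ traverses_uw k x y.
Proof. by case: k; rewrite /= ?andbT // /D' /delete_dedge /= [(x == w) && _]andbC. Qed.

Fixpoint reroute (collider : bool) (x : T) s : seq (ekind * T) :=
  if s is (k, y) :: s' then
    if traverses_uw k x y then
      match k with
      | Fwd => (Fwd, m) :: (if collider then Bi else Fwd, y) :: reroute collider y s'
      | _ => (if collider then Bi else Bwd, m) :: (Bwd, y) :: reroute collider y s'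
      end
    else (k, y) :: reroute collider y s'
  else [::].

Lemma last_reroute c x s : last x (map snd (reroute c x s)) = last x (map snd s).
Proof.
elim: s x => [|[k y] s IH] x //=.
by case: traverses_uw => /=; case: k => /=; rewrite IH.
Qed.

Lemma is_walk_reroute (c : bool) x s :
  symmetric B -> (c -> B m w) -> is_walk D B x s -> is_walk D' B x (reroute c x s).
Proof.
move=> Bsym Bmw; elim: s x => [|[k y] s IH] x //= /andP[exy wy].
case tr: (traverses_uw k x y); last first.
  by rewrite /= IH // andbT edge_ok_delete_dedge exy tr.
case: k tr exy => //= /andP[/eqP ex /eqP ey] _; subst x y.
all: rewrite delete_dedge_um IH // ?andbT; case: (c) Bmw => /= [/(_ isT)|_] //.
- exact: delete_dedge_mw.
- by rewrite Bsym.
- exact: delete_dedge_mw.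
Qed.

Lemma active_from_reroute Z k x s :
  active_from D Z k x s -> active_from D Z k x (reroute (m \in Z) x s).
Proof.
have collider_m : m \in Z -> [exists z in Z, connect D m z].
  by move=> mZ; apply/existsP; exists m; rewrite mZ connect0.
elim: s k x => [|[k' y] s IH] k x //= /andP[cx act].
case tr: (traverses_uw k' x y); last by rewrite /= cx IH.
have act' := IH _ _ act.
case: k' tr cx act act' => //= _ cx _; case mZ: (m \in Z) => /= act'.
all: rewrite cx ?collider_m //.
by rewrite (active_from_head_arrow _ _ _ (k2 := Fwd)).
Qed.

Lemma d_connected_reroute a b Z :
  symmetric B -> B m w -> a \notin Z ->
  d_connected D B a b Z -> d_connected D' B a b Z.
Proof.
move=> Bsym Bmw aZ [s /and3P[ws ls act]].
exists (reroute (m \in Z) a s); rewrite is_walk_reroute // last_reroute ls /=.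
rewrite (active_pathE _ _ aZ) (active_from_eq_connect Z connect_delete_dedge_bypass).
by apply: active_from_reroute; rewrite -active_pathE.
Qed.

End Bypass.

End DSeparation.

Theorem mainTheorem9 (T : finType) (D B : rel T) (v1 v2 v3 : T) :
  is_ADMG D B -> uniq [:: v1; v2; v3] ->
  D v1 v2 -> D v2 v3 -> B v2 v3 -> D v1 v3 ->
  markov_equiv D B (delete_dedge D v1 v3) B.
Proof.
move=> [_ _ Bsym _] /= /and3P[]; rewrite !inE negb_or => /andP[n12 _] n23 _.
move=> D12 D23 B23 _ a b Z _ aZ _.
have n21 : v2 != v1 by rewrite eq_sym.
split.
  exact: (d_connected_reroute n21 n23 D12 D23 Bsym B23 aZ).
apply: d_connected_subrel aZ; first exact: delete_dedge_subrel.
exact: connect_delete_dedge_bypass n21 n23 D12 D23.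
Qed.
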